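(* Let $(\Gamma,\boldsymbol{\ell})$ be a metric graph, $f$ an eigenfunction with eigenvalue $k^2\ne0$, and $\mathbf{x}=\mathrm{tr}_k(f)$. Let $\mathrm{supp}(f)$ be the set of edges $e_j$ with $f|_{e_j}\not\equiv0$ and set $s_j=e^{ik\ell_j}$ for $e_j\in\mathrm{supp}(f)$. Then the set $\mathcal{T}(\Gamma)_{\mathbf{x}}:=\{\mathbf{z}\in\Sigma(\Gamma):(\mathbf{z},\mathbf{x})\in\mathcal{T}(\Gamma)\}$ equals $\{\mathbf{z}\in\mathbb{T}^N: z_j=s_j\text{ for every }e_j\in\mathrm{supp}(f)\}$; in particular it is a torus of dimension $N-|\mathrm{supp}(f)|$ contained in $\Sigma(\Gamma)$.
   Context: $\Gamma$: finite graph with edges $e_1,\dots,e_N$, each oriented. $(\Gamma,\boldsymbol{\ell})$: $e_j\cong[0,\ell_j]$, Laplacian $-d^2/dt^2$ edgewise with standard vertex conditions (continuity, zero sum of outgoing derivatives at each vertex). For an eigenpair with $k>0$: $f|_{e_j}(t)=A_j\cos(kt)+B_j\sin(kt)=C_j\cos(k(\ell_j-t))+D_j\sin(k(\ell_j-t))$, and $\mathrm{tr}_k(f)\in\mathbb{C}^{4N}$ is the vector of all $A_j,B_j,C_j,D_j$ (for $k=0$, constant $c$: $A_j=C_j=c$, $B_j=D_j=0$). $\mathbb{T}^N=\{\mathbf{z}\in\mathbb{C}^N:|z_j|=1\}$, $\exp(ik\boldsymbol{\ell})=(e^{ik\ell_j})_j$. Trace space $\mathcal{T}(\Gamma)=\{(\exp(ik\boldsymbol{\ell}'),\mathrm{tr}_{k}(g))\}$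 over all $\boldsymbol{\ell}'\in\mathbb{R}_+^N$, $k\ge0$ with $k^2$ an eigenvalue of $(\Gamma,\boldsymbol{\ell}')$, and $g$ in the corresponding eigenspace (including $0$); $\Sigma(\Gamma)$ is its projection to $\mathbb{T}^N$. *)

From HB Require Import structures.
From mathcomp Require Import all_boot all_order all_algebra.
From mathcomp Require Import all_classical all_reals.
From mathcomp Require Import trigo.
From mathcomp Require Import complex.

Set Implicit Arguments.
Unset Strict Implicit.
Unset Printing Implicit Defensive.

Import Order.TTheory GRing.Theory Num.Theory.
Local Open Scope ring_scope.
Local Open Scope complex_scope.
Local Open Scope classical_set_scope.

(* A finite graph Γ with vertex set V and N oriented edges e_j (j : 'I_N),
   edge e_j going from vertex [src j] (at t = 0) to vertex [tgt j]
   (at t = l j).  Loops and multiple edges are allowed. *)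

Section MetricGraph.
Variables (R : realType) (V : finType) (N : nat) (src tgt : 'I_N -> V).

Definition expi (t : R) : R[i] := (cos t)%:C + 'i * (sin t)%:C.

Definition torus : set ('I_N -> R[i]) := [set z | forall j, `|z j| = 1].

Definition exp_ikl (k : R) (l : 'I_N -> R) : 'I_N -> R[i] :=
  fun j => expi (k * l j).

(* For k > 0, an edgewise solution of -f'' = k^2 f is given by
   coefficients A_j, B_j : f|_{e_j}(t) = A_j cos(kt) + B_j sin(kt). *)
Definition efun (k : R) (A B : 'I_N -> R[i]) (j : 'I_N) (t : R) : R[i] :=
  A j * (cos (k * t))%:C + B j * (sin (k * t))%:C.

Definition efun_der (k : R) (A B : 'I_N -> R[i]) (j : 'I_N) (t : R) : R[i] :=
  k%:C * (B j * (cos (k * t))%:C - A j * (sin (k * t))%:C).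

(* standard (Neumann–Kirchhoff) vertex conditions on (Γ, l):
   continuity at each vertex, and zero sum of outgoing derivatives
   (outgoing derivative is f'(0) at the origin, -f'(l_j) at the end). *)
Definition standard_conditions (l : 'I_N -> R) (k : R) (A B : 'I_N -> R[i]) : Prop :=
  (exists phi : V -> R[i], forall j,
      efun k A B j 0 = phi (src j) /\ efun k A B j (l j) = phi (tgt j)) /\
  (forall v : V,
      \sum_(j | src j == v) efun_der k A B j 0
      - \sum_(j | tgt j == v) efun_der k A B j (l j) = 0).

Definition on_support (l : 'I_N -> R) (k : R) (A B : 'I_N -> R[i]) (j : 'I_N) : Prop :=
  exists2 t, 0 <= t <= l j & efun k A B j t != 0.

Definition eigenfunction (l : 'I_N -> R) (k : R) (A B : 'I_N -> R[i]) : Prop :=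
  0 < k /\ standard_conditions l k A B /\ exists j, on_support l k A B j.

(* k^2 is an eigenvalue of (Γ, l) (k >= 0); 0 is always an eigenvalue
   (constants). *)
Definition sq_eigenvalue (l : 'I_N -> R) (k : R) : Prop :=
  k = 0 \/ exists A B, eigenfunction l k A B.

(* the trace vector tr_k(f) ∈ C^{4N}, stored as (A_j, B_j, C_j, D_j)_j,
   where f|_{e_j}(t) = C_j cos(k(l_j - t)) + D_j sin(k(l_j - t)), i.e.
   C_j = f(l_j), D_j = - f'(l_j) / k. *)
Definition trace_vec := 'I_N -> (R[i] * R[i] * R[i] * R[i])%type.

Definition tr_k (l : 'I_N -> R) (k : R) (A B : 'I_N -> R[i]) : trace_vec :=
  fun j => (A j, B j,
            A j * (cos (k * l j))%:C + B j * (sin (k * l j))%:C,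
            A j * (sin (k * l j))%:C - B j * (cos (k * l j))%:C).

(* trace of the constant eigenfunction c for k = 0 *)
Definition tr_0 (c : R[i]) : trace_vec := fun _ => (c, 0, c, 0).

Definition trace_space : set (('I_N -> R[i]) * trace_vec) :=
  [set zx | exists l : 'I_N -> R, (forall j, 0 < l j) /\
     ((exists c : R[i], zx = (exp_ikl 0 l, tr_0 c)) \/
      (exists k : R, 0 < k /\ sq_eigenvalue l k /\
         exists A B : 'I_N -> R[i], standard_conditions l k A B /\
           zx = (exp_ikl k l, tr_k l k A B)))].

Definition Sigma : set ('I_N -> R[i]) := [set z | exists x, trace_space (z, x)].

Definition fibre (x : trace_vec) : set ('I_N -> R[i]) :=
  [set z | Sigma z /\ trace_space (z, x)].

End MetricGraph.

(* Off the support of f the coefficients A_j, B_j vanish, so the lengths of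
   those edges can be changed freely without affecting the vertex conditions
   or the trace; choosing them so that k l'_j realises any prescribed phase
   shows that every such point of the torus lies in the fibre.  Conversely,
   on an edge of the support the end values (C_j, D_j) of the trace,
   together with (A_j, B_j) <> 0, determine cos (k l_j) and sin (k l_j),
   hence the phase e^{i k l_j}. *)

From HB Require Import structures.
From mathcomp Require Import all_boot all_order all_algebra.
From mathcomp Require Import all_classical all_reals.
From mathcomp Require Import trigo.
From mathcomp Require Import complex.
From mathcomp Require Import ring lra.

Set Implicit Arguments.
Unset Strict Implicit.
Unset Printing Implicit Defensive.

Import Order.TTheory GRing.Theory Num.Theory.
Local Open Scope ring_scope.
Local Open Scope complex_scope.
Local Open Scope classical_set_scope.

Section Expi.
Variable R : realType.

Lemma expiE (t : R) : expi t = (cos t) +i* (sin t).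
Proof. by apply/eqP; rewrite /expi eq_complex /=; apply/andP; split; apply/eqP; ring. Qed.

Lemma norm_expi (t : R) : `|expi t| = 1.
Proof.
have h := add_Re2_Im2 (expi t).
rewrite {1 2}expiE /= (addrC (cos t ^+ 2)) sin2cos2 in h.
have h2 : `|expi t| ^+ 2 = 1 ^+ 2 by rewrite -h subrK expr1n.
by move/eqP: h2; rewrite eqrXn2 // => /eqP.
Qed.

Lemma expi_onto_pos (z : R[i]) : `|z| = 1 -> exists2 t : R, 0 < t & expi t = z.
Proof.
case: z => a b hz.
have h := add_Re2_Im2 (a +i* b); rewrite hz expr1n /= in h.
have hab : a ^+ 2 + b ^+ 2 = 1 by apply: (@complexI R); rewrite h.
have ha : -1 <= a <= 1 by apply/andP; split; nra.
have sin_acos_a : sin (acos a) = `|b|.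
  by rewrite sin_acos // -sqrtr_sqr; congr Num.sqrt; lra.
have cos_acos_a : cos (acos a) = a by rewrite acosK // in_itv.
have acos_a_ge0 := acos_ge0 ha; have acos_a_le := acos_lepi ha.
have pi_gt0 := @pi_gt0 R.
have [b0|b0] := leP 0 b.
  exists (acos a + pi *+ 2); first by rewrite mulr2n; lra.
  by rewrite expiE cosD2pi sinD2pi cos_acos_a sin_acos_a ger0_norm.
exists (pi *+ 2 - acos a); first by rewrite mulr2n; lra.
rewrite expiE cosB sinB cos2pi sin2pi cos_acos_a sin_acos_a ltr0_norm //.
by congr (_ +i* _); ring.
Qed.

(* The 2x2 system in (c, s) has determinant -(A^2 + B^2), which can vanish
   over C; injectivity comes from the differences c - c', s - s' being real. *)
Lemma end_trace_inj (A B : R[i]) (c s c' s' : R) :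
  (A != 0) || (B != 0) ->
  A * c%:C + B * s%:C = A * c'%:C + B * s'%:C ->
  A * s%:C - B * c%:C = A * s'%:C - B * c'%:C -> c = c' /\ s = s'.
Proof.
move=> AB_neq0 eC eD.
set al := c%:C - c'%:C; set be := s%:C - s'%:C.
have e1 : A * al + B * be = 0.
  by move/eqP: eC; rewrite -subr_eq0 => /eqP <-; rewrite /al /be; ring.
have e2 : A * be - B * al = 0.
  by move/eqP: eD; rewrite -subr_eq0 => /eqP <-; rewrite /al /be; ring.
set q : R[i] := ((c - c') ^+ 2 + (s - s') ^+ 2)%:C.
have qE : q = al ^+ 2 + be ^+ 2 by rewrite /q rmorphD !rmorphXn !rmorphB.
have qA : q * A = 0.
  have -> : q * A = al * (A * al + B * be) + be * (A * be - B * al) by rewrite qE; ring.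
  by rewrite e1 e2 !mulr0 addr0.
have qB : q * B = 0.
  have -> : q * B = be * (A * al + B * be) - al * (A * be - B * al) by rewrite qE; ring.
  by rewrite e1 e2 !mulr0 subr0.
have /eqP : q = 0.
  apply/eqP; apply: contraTT AB_neq0 => q_neq0.
  by move/eqP: qA; move/eqP: qB; rewrite !mulf_eq0 (negbTE q_neq0) /= => -> ->.
rewrite -(rmorph0 (real_complex R)) (inj_eq (@complexI R)).
by rewrite paddr_eq0 ?sqr_ge0 // !sqrf_eq0 !subr_eq0 => /andP [/eqP -> /eqP ->].
Qed.

End Expi.

Section Edge.
Variables (R : realType) (N : nat) (k : R) (A B : 'I_N -> R[i]).

Lemma on_support_coef_neq0 (l : 'I_N -> R) j :
  on_support l k A B j -> (A j != 0) || (B j != 0).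
Proof.
case=> t _; apply: contraNT; rewrite negb_or !negbK => /andP [/eqP A0 /eqP B0].
by rewrite /efun A0 B0 !mul0r addr0.
Qed.

(* The zero at 0 forces A_j = 0; then sin (k t) <> 0 at a point t of the edge
   with 0 < k t < pi forces B_j = 0. *)
Lemma coef_eq0_off_support (l : 'I_N -> R) j :
  0 < k -> 0 < l j -> ~ on_support l k A B j -> A j = 0 /\ B j = 0.
Proof.
move=> k_gt0 l_gt0 off.
have f0 t : 0 <= t <= l j -> efun k A B j t = 0.
  by move=> ht; apply/eqP; apply/negPn/negP => ?; apply: off; exists t.
have A0 : A j = 0.
  have := f0 0; rewrite lexx ltW // => /(_ isT).
  by rewrite /efun mulr0 cos0 sin0 mulr1 mulr0 addr0.
split => //; have pi_gt0 := @pi_gt0 R.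
set t := l j * pi / (pi + k * l j).
have d_gt0 : 0 < pi + k * l j by nra.
have t_gt0 : 0 < t by apply: divr_gt0 => //; nra.
have t_le : t <= l j by rewrite ler_pdivrMr //; nra.
have kt : 0 < k * t < pi.
  by apply/andP; split; [nra | rewrite mulrA ltr_pdivrMr //; nra].
have := f0 t; rewrite ltW // t_le => /(_ isT).
rewrite /efun A0 mul0r add0r => /eqP; rewrite mulf_eq0 => /orP [/eqP //|].
have := sin_gt0_pi kt; rewrite lt0r => /andP [sin_neq0 _].
by rewrite -(rmorph0 (real_complex R)) (inj_eq (@complexI R)) (negbTE sin_neq0).
Qed.

Lemma tr_k_eq_expi (l l' : 'I_N -> R) (k' : R) (A' B' : 'I_N -> R[i]) j :
  (A j != 0) || (B j != 0) -> tr_k l' k' A' B' j = tr_k l k A B j ->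
  expi (k' * l' j) = expi (k * l j).
Proof.
move=> AB_neq0 [-> ->] eC eD.
by rewrite !expiE; have [-> ->] := end_trace_inj AB_neq0 eC eD.
Qed.

End Edge.

Lemma tr_0E (R : realType) (N : nat) (l : 'I_N -> R) (c : R[i]) :
  @tr_0 R N c = tr_k l 0 (fun=> c) (fun=> 0).
Proof.
by apply: funext => j; rewrite /tr_k /tr_0 !mul0r cos0 sin0 mulr1 mulr0 addr0 subr0.
Qed.

Lemma trace_space_tr_k (R : realType) (V : finType) (N : nat) (src tgt : 'I_N -> V)
    (z : 'I_N -> R[i]) (x : trace_vec R N) :
  trace_space src tgt (z, x) ->
  exists k' l' (A' B' : 'I_N -> R[i]), z = exp_ikl k' l' /\ x = tr_k l' k' A' B'.
Proof.
case=> l' [_ [[c [-> ->]] | [k' [_ [_ [A' [B' [_ [-> ->]]]]]]]]].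
  by exists 0, l', (fun=> c), (fun=> 0); rewrite -tr_0E.
by exists k', l', A', B'.
Qed.

Lemma torus_exp_ikl (R : realType) (N : nat) (k : R) (l : 'I_N -> R) (z : 'I_N -> R[i]) :
  0 < k -> (forall j, 0 < l j) -> torus z ->
  exists l', [/\ forall j, 0 < l' j, exp_ikl k l' = z &
                 forall j, z j = expi (k * l j) -> l' j = l j].
Proof.
move=> k_gt0 l_gt0 z_torus.
have /choice [t t_spec] j : exists t : R, 0 < t /\ expi t = z j.
  by have [t] := expi_onto_pos (z_torus j); exists t.
pose l' j := if `[< z j = expi (k * l j) >] then l j else t j / k.
exists l'; split => [j | | j zj].
- rewrite /l'; case: asboolP => _; first exact: l_gt0.
  by apply: divr_gt0 => //; case: (t_spec j).
- apply: funext => j; rewrite /exp_ikl /l'; case: asboolP => [-> //|_].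
  by case: (t_spec j) => _ <-; rewrite mulrC divfK // gt_eqF.
- by rewrite /l'; case: asboolP.
Qed.

Section ChangeLengths.
Variables (R : realType) (V : finType) (N : nat) (src tgt : 'I_N -> V).
Variables (k : R) (A B : 'I_N -> R[i]) (l l' : 'I_N -> R).
Hypothesis same_or_zero : forall j, l' j = l j \/ A j = 0 /\ B j = 0.

Lemma end_values_change_lengths j :
  efun k A B j (l' j) = efun k A B j (l j) /\
  efun_der k A B j (l' j) = efun_der k A B j (l j).
Proof.
case: (same_or_zero j) => [-> // | [A0 B0]].
by rewrite /efun /efun_der A0 B0 !mul0r !subrr !addr0.
Qed.

Lemma tr_k_change_lengths : tr_k l' k A B = tr_k l k A B.
Proof.
apply: funext => j; case: (same_or_zero j) => [|[A0 B0]]; rewrite /tr_k.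
  by move->.
by rewrite A0 B0 !mul0r subrr addr0.
Qed.

Lemma standard_conditions_change_lengths :
  standard_conditions src tgt l k A B -> standard_conditions src tgt l' k A B.
Proof.
case=> [[phi phiP] kirchhoff]; split.
  by exists phi => j; have [-> _] := end_values_change_lengths j; exact: phiP.
move=> v; rewrite -[RHS](kirchhoff v); congr (_ - _).
by apply: eq_bigr => j _; have [_ ->] := end_values_change_lengths j.
Qed.

End ChangeLengths.

Theorem mainTheorem18 (R : realType) (V : finType) (N : nat)
    (src tgt : 'I_N -> V) (l : 'I_N -> R) (k : R) (A B : 'I_N -> R[i]) :
  (forall j, 0 < l j) ->
  eigenfunction src tgt l k A B ->
  fibre src tgt (tr_k l k A B) =
    [set z | torus z /\
       forall j, on_support l k A B j -> z j = expi (k * l j)] /\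
  fibre src tgt (tr_k l k A B) `<=` Sigma src tgt.
Proof.
move=> l_gt0 [k_gt0 [sc [j0 supp_j0]]].
split; last by move=> z [].
apply/seteqP; split => z.
  move=> [_ /trace_space_tr_k [k' [l' [A' [B' [-> tr_eq]]]]]].
  split=> [j | j supp_j]; first by rewrite /exp_ikl norm_expi.
  rewrite /exp_ikl.
  exact: tr_k_eq_expi (on_support_coef_neq0 supp_j) (congr1 (fun x => x j) (esym tr_eq)).
move=> [z_torus z_supp].
have [l' [l'_gt0 l'_phase l'_supp]] := torus_exp_ikl k_gt0 l_gt0 z_torus.
have same_or_zero j : l' j = l j \/ A j = 0 /\ B j = 0.
  have [supp_j | off_j] := pselect (on_support l k A B j).
    by left; apply: l'_supp; exact: z_supp.
  by right; exact: coef_eq0_off_support k_gt0 (l_gt0 j) off_j.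
have sc' := standard_conditions_change_lengths same_or_zero sc.
have ts : trace_space src tgt (z, tr_k l k A B).
  exists l'; split => //; right; exists k; split => //; split.
    right; exists A, B; split => //; split => //; exists j0.
    by rewrite /on_support l'_supp //; exact: z_supp.
  exists A, B; split => //.
  by rewrite (tr_k_change_lengths k same_or_zero) l'_phase.
by split => //; exists (tr_k l k A B).
Qed.
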